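(* Let $X=\sum_{p,q\ge0}x_{p,q}a^pb^q\in\tilde{\mathcal{A}}_{conv.}$ with $x_{0,0}=1$. Then $X$ is invertible in the algebra $\tilde{\mathcal{A}}_{conv.}$.
   Context: Let $\mathcal{A}_0$ be the $\mathbb{C}$-algebra of polynomials in $a,b$ subject to $ab-ba=b^2$, and $\widehat{\mathcal{A}}$ its completion for the $(a,b)$-adic topology, i.e. the algebra of formal power series $\sum_{p,q\ge0}\gamma_{p,q}a^pb^q$ with product extending that of $\mathcal{A}_0$. $\tilde{\mathcal{A}}_{conv.}\subset\widehat{\mathcal{A}}$ is the subalgebra of those series for which there exist $R>1$, $C_R>0$ with $|\gamma_{p,q}|\le C_RR^{p+q}q!$ for all $p,q\in\mathbb{N}$. *)

From HB Require Import structures.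
From mathcomp Require Import all_boot all_order all_algebra.
From mathcomp Require Import complex.
From mathcomp Require Import reals.
Set Implicit Arguments. Unset Strict Implicit. Unset Printing Implicit Defensive.
Import Order.TTheory GRing.Theory Num.Theory.
Local Open Scope ring_scope.
Local Open Scope complex_scope.

(* A formal series  sum_{p,q} X p q a^p b^q  in normally ordered monomials
   (a's on the left, b's on the right) of the completion \hat A of
   A_0 = C<a,b>/(ab - ba = b^2). *)
Definition aseries (R : realType) := nat -> nat -> R[i].

Definition rising (q k : nat) : nat := \prod_(i < k) (q + i).

(* Commutation rule in A_0: since [a,b] = b^2, ad_a(b^q) = q b^(q+1), hence
     b^q a^r = \sum_k (-1)^k 'C(r,k) q(q+1)...(q+k-1) a^(r-k) b^(q+k).
   Therefore  (a^p b^q)(a^r b^s) = \sum_k (-1)^k 'C(r,k) rising q k a^(p+r-k) b^(q+s+k).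
   The coefficient of a^m b^n in X*Y collects the terms with p + r - k = m and
   q + s + k = n, i.e. p <= m, q <= n, k <= n - q, r = m - p + k, s = n - q - k
   (a finite sum, so the product is well defined on the completion). *)
Definition amul (R : realType) (X Y : aseries R) : aseries R :=
  fun m n =>
    \sum_(p < m.+1) \sum_(q < n.+1) \sum_(k < (n - q).+1)
      ((-1) ^+ k * ('C(m - p + k, k) * rising q k)%:R
        * X p q * Y (m - p + k)%N (n - q - k)%N).

Definition aone (R : realType) : aseries R :=
  fun p q => if (p == 0%N) && (q == 0%N) then 1 else 0.

Definition aconv (R : realType) (X : aseries R) : Prop :=
  exists (R0 C : R), 1 < R0 /\ 0 < C /\
    forall p q : nat, `|X p q| <= ((C * R0 ^+ (p + q) * (q`!)%:R)%:C).

Definition ainvertible_conv (R : realType) (X : aseries R) : Prop :=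
  exists Y : aseries R, aconv Y /\ amul X Y = aone R /\ amul Y X = aone R.

From HB Require Import structures.
From mathcomp Require Import all_boot all_order all_algebra.
From mathcomp Require Import complex.
From mathcomp Require Import reals.
From mathcomp Require Import ring lra zify.
From Stdlib Require Import FunctionalExtensionality.
Import Order.TTheory GRing.Theory Num.Theory.
Local Open Scope ring_scope.
Local Open Scope complex_scope.
Set Implicit Arguments. Unset Strict Implicit. Unset Printing Implicit Defensive.

(* The right inverse Y of X is computed degree by degree: the coefficient of
   a^m b^n in X Y is Y_{m,n} plus terms involving Y only in total degree
   < m + n.  Induction on m + n gives |Y_{m,n}| <= S^(m+n) (m+n)!/m! with
   S = 6 R0 (C + 1): the coefficients created by moving b^q past a^r are
   controlled by rising factorials, and what remains is a geometric sum in
   R0 / S.  Since (m+n)!/m! <= 2^(m+n) n!, Y lies in \tilde A_conv.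
   Y is also a left inverse: the algebra acts faithfully on the span of the
   t^z, z complex, by b = t and a = t^2 d/dt, so the product is associative,
   and Y X = 1 because Y itself has a right inverse. *)

Lemma risingn0 q : rising q 0 = 1%N.
Proof. by rewrite /rising big_ord0. Qed.

Lemma risingnSr q k : rising q k.+1 = (rising q k * (q + k))%N.
Proof. by rewrite /rising big_ord_recr. Qed.

Lemma risingnS q k : rising q k.+1 = (q * rising q.+1 k)%N.
Proof.
rewrite /rising big_ord_recl addn0; congr (_ * _)%N.
by apply: eq_bigr => i _; rewrite lift0 addSnnS.
Qed.

Lemma risingnD q i j : rising q (i + j) = (rising q i * rising (q + i) j)%N.
Proof.
elim: j => [|j IH]; first by rewrite addn0 risingn0 muln1.
by rewrite addnS !risingnSr IH addnA mulnA.
Qed.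

Lemma rising0S k : rising 0 k.+1 = 0%N.
Proof. by rewrite risingnS. Qed.

Lemma rising1n n : rising 1 n = n`!.
Proof.
elim: n => [|n IH]; first by rewrite risingn0.
by rewrite risingnSr IH factS mulnC add1n.
Qed.

Lemma bin_rising a k : ('C(a + k, k) * k`! = rising a.+1 k)%N.
Proof.
elim: k => [|k IH]; first by rewrite bin0 risingn0.
rewrite risingnSr -IH factS mulnA addnS.
have := mul_bin_diag (a + k).+1 k; rewrite /= => bin_diag.
rewrite [in LHS](mulnC _ k.+1) -bin_diag addSn; ring.
Qed.

Lemma leq_rising x y k : (x <= y)%N -> (rising x k <= rising y k)%N.
Proof. by move=> le_xy; apply: leq_prod => i _; rewrite leq_add2r. Qed.

Lemma leq_bin_exp N k : ('C(N, k) <= 2 ^ N)%N.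
Proof.
elim: N k => [|N IH] [|k] //; first by rewrite bin0 expn_gt0.
by rewrite binS expnS mul2n -addnn leq_add.
Qed.

Lemma rising_le_exp_fact (R : numDomainType) m n :
  ((rising m.+1 n)%:R : R) <= 2 ^+ (m + n) * (n`!)%:R.
Proof.
rewrite -(bin_rising m n) natrM ler_wpM2r ?ler0n //.
by rewrite -natrX ler_nat leq_bin_exp.
Qed.

Lemma sum_rising_fact q b :
  (\sum_(k < b.+1) rising q k * rising k.+1 (b - k) = rising q.+1 b)%N.
Proof.
elim: b => [|b IH]; first by rewrite big_ord1 /= !risingn0.
rewrite big_ord_recr /= subnn risingn0 muln1.
transitivity ((\sum_(k < b.+1) rising q k * rising k.+1 (b - k)) * b.+1 + rising q b.+1)%N.
  congr (_ + _)%N; rewrite big_distrl /=; apply: eq_bigr => k _.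
  have le_kb : (k <= b)%N by rewrite -ltnS.
  by rewrite subSn // risingnSr addSn subnKC // mulnA.
by rewrite IH (risingnSr q.+1 b) (risingnS q b); ring.
Qed.

Lemma sum_reorder_coef_fact a b q :
  ((\sum_(k < b.+1) 'C(a + k, k) * rising q k * rising (a + k).+1 (b - k)) * b`!
   = rising a.+1 b * rising q.+1 b)%N.
Proof.
rewrite -(sum_rising_fact q b) big_distrl big_distrr /=; apply: eq_bigr => k _.
have le_kb : (k <= b)%N by rewrite -ltnS.
have -> : b`! = (k`! * rising k.+1 (b - k))%N.
  by rewrite -!rising1n -risingnD subnKC // add1n.
have -> : rising a.+1 b = (rising a.+1 k * rising (a + k).+1 (b - k))%N.
  by rewrite -addSn -risingnD subnKC.
rewrite -(bin_rising a k); ring.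
Qed.

Lemma sum_reorder_coef_le a b p q :
  ((\sum_(k < b.+1) 'C(a + k, k) * rising q k * rising (a + k).+1 (b - k)) * q`!
   <= rising (a + p).+1 (b + q))%N.
Proof.
set T := (\sum_(k < b.+1) _)%N.
have -> : (T * q`! = rising a.+1 b * rising b.+1 q)%N.
  apply/eqP; rewrite -(eqn_pmul2r (fact_gt0 b)) mulnAC sum_reorder_coef_fact -mulnA.
  have -> : (rising q.+1 b * q`! = b`! * rising b.+1 q)%N.
    by rewrite -!rising1n mulnC -[q.+1]add1n -risingnD -[b.+1]add1n -risingnD addnC.
  by apply/eqP; ring.
apply: (@leq_trans (rising a.+1 (b + q))).
  by rewrite risingnD leq_mul2l leq_rising ?orbT // addSn ltnS leq_addl.
by apply: leq_rising; rewrite ltnS leq_addr.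
Qed.

Section Pochhammer.
Variable K : comNzRingType.
Implicit Types w : K.

Definition poch w (p : nat) : K := \prod_(i < p) (w + i%:R).

Lemma poch0 w : poch w 0 = 1.
Proof. by rewrite /poch big_ord0. Qed.

Lemma pochSr w p : poch w p.+1 = poch w p * (w + p%:R).
Proof. by rewrite /poch big_ord_recr. Qed.

Lemma pochS w p : poch w p.+1 = w * poch (w + 1) p.
Proof.
rewrite /poch big_ord_recl /= addr0; congr (_ * _).
by apply: eq_bigr => i _; rewrite /bump /= add1n -nat1r addrA.
Qed.

Lemma pochD w a b : poch w (a + b) = poch w a * poch (w + a%:R) b.
Proof.
elim: b => [|b IH]; first by rewrite addn0 poch0 mulr1.
by rewrite addnS !pochSr IH natrD addrA mulrA.
Qed.

Lemma poch_eq0 w p i : (i < p)%N -> w + i%:R = 0 -> poch w p = 0.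
Proof. by move=> lt_ip wi0; rewrite /poch (bigD1 (Ordinal lt_ip)) //= wi0 mul0r. Qed.

(* The commutation rule b^q a^r = \sum_k (-1)^k 'C(r, k) q(q+1)..(q+k-1) a^(r-k) b^(q+k)
   of A_0, read off on t^w in the representation b = t, a = t^2 d/dt. *)
Lemma poch_reorder q r w :
  \sum_(k < r.+1) (-1) ^+ k * ('C(r, k) * rising q k)%:R * poch (w + (q + k)%:R) (r - k)
  = poch w r.
Proof.
elim: r w => [|r IH] w.
  by rewrite big_ord1 expr0 bin0 risingn0 !mul1r !poch0.
rewrite big_ord_recl.
under eq_bigr => j _ do rewrite lift0 binS mulnDl natrD mulrDr mulrDl.
rewrite big_split /= addrA.
set A := (X in X + _ = _).
have -> : A = \sum_(k < r.+1)
    (-1) ^+ k * ('C(r, k) * rising q k)%:R * poch (w + (q + k)%:R) (r.+1 - k).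
  transitivity (\sum_(k < r.+2)
      (-1) ^+ k * ('C(r, k) * rising q k)%:R * poch (w + (q + k)%:R) (r.+1 - k)).
    by rewrite [RHS]big_ord_recl /A /= !bin0.
  by rewrite big_ord_recr /= bin_small // mul0n mulr0 mul0r addr0.
rewrite -big_split /= pochS -IH mulr_sumr; apply: eq_bigr => k _.
have le_kr : (k <= r)%N by rewrite -ltnS.
rewrite subSn // pochS risingnSr exprS !natrM.
rewrite ?addnS -natr1 addrA (addrAC w 1); ring.
Qed.

End Pochhammer.

Lemma poch1_neq0 (K : numDomainType) j : poch (1 : K) j != 0.
Proof. by apply/prodf_neq0 => i _; rewrite nat1r pnatr_eq0. Qed.

Section TriangleSums.
Variable V : nmodType.
Implicit Types F : nat -> nat -> V.

Lemma sum_antidiag_rev F N :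
  \sum_(i < N.+1) F i (N - i)%N = \sum_(i < N.+1) F (N - i)%N i.
Proof.
rewrite (reindex_inj rev_ord_inj); apply: eq_bigr => i _.
by rewrite /= subSS subKn // -ltnS.
Qed.

Lemma sum_triangle_recr F M :
  \sum_(i < M.+2) \sum_(j < (M.+1 - i).+1) F i j =
  \sum_(i < M.+1) \sum_(j < (M - i).+1) F i j + \sum_(i < M.+2) F i (M.+1 - i)%N.
Proof.
rewrite big_ord_recr /= subnn big_ord1.
rewrite [X in _ = _ + X]big_ord_recr /= subnn addrA; congr (_ + _).
rewrite -big_split /=; apply: eq_bigr => i _.
by rewrite subSn ?big_ord_recr // -ltnS.
Qed.

Lemma exchange_triangle F M :
  \sum_(i < M.+1) \sum_(j < (M - i).+1) F i j =
  \sum_(j < M.+1) \sum_(i < (M - j).+1) F i j.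
Proof.
elim: M => [|M IH]; first by rewrite !big_ord1.
rewrite sum_triangle_recr (sum_triangle_recr (fun j i => F i j)) IH.
by rewrite sum_antidiag_rev.
Qed.

Lemma sum_triangle_antidiag F M :
  \sum_(i < M.+1) \sum_(j < (M - i).+1) F i j =
  \sum_(r < M.+1) \sum_(k < r.+1) F (r - k)%N k.
Proof.
elim: M => [|M IH]; first by rewrite !big_ord1.
by rewrite sum_triangle_recr IH [RHS]big_ord_recr /= sum_antidiag_rev.
Qed.

Lemma exchange_simplex3 d (h : nat -> nat -> nat -> V) :
  \sum_(e < d.+1) \sum_(r < e.+1) \sum_(p < (d - e).+1) h e r p =
  \sum_(p < d.+1) \sum_(q < (d - p).+1) \sum_(r < (d - p - q).+1) h (d - p - q)%N r p.
Proof.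
under eq_bigr => e _ do rewrite exchange_big /=.
rewrite (exchange_triangle (fun e p => \sum_(r < e.+1) h e r p)).
apply: eq_bigr => p _; rewrite (reindex_inj rev_ord_inj).
by apply: eq_bigr => q _; rewrite /= subSS.
Qed.

Lemma reindex_simplex4 d (g : nat -> nat -> nat -> nat -> V) :
  \sum_(m < d.+1) \sum_(p < m.+1) \sum_(q < (d - m).+1) \sum_(k < (d - m - q).+1) g m p q k
  = \sum_(p < d.+1) \sum_(q < (d - p).+1) \sum_(r < (d - p - q).+1) \sum_(k < r.+1)
      g (p + r - k)%N p q k.
Proof.
pose G m p := \sum_(q < (d - m).+1) \sum_(k < (d - m - q).+1) g m p q k.
transitivity (\sum_(m < d.+1) \sum_(p < m.+1) G ((m - p) + p)%N p).
  by apply: eq_bigr => m _; apply: eq_bigr => p _; rewrite subnK // -ltnS.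
rewrite -(sum_triangle_antidiag (fun i p => G (i + p)%N p)).
rewrite (exchange_triangle (fun i p => G (i + p)%N p)); apply: eq_bigr => p _.
under eq_bigr => i _ do rewrite /G (addnC i p) subnDA.
rewrite (exchange_triangle (fun i q => \sum_(k < (d - p - i - q).+1) g (p + i)%N p q k)).
apply: eq_bigr => q _.
under eq_bigr => i _ do rewrite subnAC.
rewrite (sum_triangle_antidiag (fun i k => g (p + i)%N p q k)).
by apply: eq_bigr => r _; apply: eq_bigr => k _; rewrite addnBA // -ltnS.
Qed.

Lemma sum_split_origin m n F :
  \sum_(p < m.+1) \sum_(q < n.+1) F p q =
  F 0%N 0%N + \sum_(p < m.+1) \sum_(q < n.+1 | (0 < p + q)%N) F p q.
Proof.
rewrite !big_ord_recl /= -addrA; congr (_ + (_ + _)).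
by rewrite [RHS]big_mkcond [RHS]big_ord_recl /=; symmetry; apply: add0r.
Qed.

End TriangleSums.

Section Representation.
Variable R : realType.
Implicit Types X Y W : aseries R.

(* A graded operator A sends t^z to \sum_d A z d t^(z + d), for z complex.
   The algebra acts by b = t and a = t^2 d/dt, so that
   a^p b^q t^z = (z + q)(z + q + 1)...(z + q + p - 1) t^(z + p + q). *)
Definition gop := R[i] -> nat -> R[i].

Definition gcomp (A B : gop) : gop :=
  fun z d => \sum_(e < d.+1) B z e * A (z + e%:R) (d - e)%N.

Definition gid : gop := fun _ d => if d == 0%N then 1 else 0.

Definition act X : gop :=
  fun z d => \sum_(p < d.+1) X p (d - p)%N * poch (z + (d - p)%:R) p.

Lemma gcompA (A B D : gop) : gcomp (gcomp A B) D = gcomp A (gcomp B D).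
Proof.
apply: functional_extensionality => z; apply: functional_extensionality => d.
rewrite /gcomp /=.
under [RHS]eq_bigr => g _ do rewrite mulr_suml.
under eq_bigr => e _ do rewrite mulr_sumr.
pose F f e := D z e * B (z + e%:R) f * A (z + e%:R + f%:R) (d - e - f)%N.
transitivity (\sum_(e < d.+1) \sum_(f < (d - e).+1) F f e).
  by apply: eq_bigr => e _; apply: eq_bigr => f _; rewrite /F mulrA.
rewrite -exchange_triangle sum_triangle_antidiag.
apply: eq_bigr => g _; apply: eq_bigr => e _.
have le_eg : (e <= g)%N by rewrite -ltnS.
by rewrite /F -addrA -natrD subnKC // -subnDA subnKC.
Qed.

Lemma gcomp1r (A : gop) : gcomp A gid = A.
Proof.
apply: functional_extensionality => z; apply: functional_extensionality => d.
rewrite /gcomp big_ord_recl /gid /= mul1r addr0 subn0.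
by rewrite big1 ?addr0 // => i _; rewrite mul0r.
Qed.

Lemma gcomp1l (A : gop) : gcomp gid A = A.
Proof.
apply: functional_extensionality => z; apply: functional_extensionality => d.
rewrite /gcomp big_ord_recr /gid /= subnn eqxx mulr1.
by rewrite big1 ?add0r // => i _; rewrite subn_eq0 leqNgt ltn_ord mulr0.
Qed.

Lemma act_aone : act (aone R) = gid.
Proof.
apply: functional_extensionality => z; apply: functional_extensionality => d.
rewrite /act /gid /aone; case: d => [|d].
  by rewrite big_ord1 /= poch0 mulr1.
by rewrite big1 // => -[[|p] ?] _; rewrite /= mul0r.
Qed.

(* Taking z = j + 1 - d kills the terms p > j and keeps p = j: the coefficients
   of degree d are recovered by triangular elimination. *)
Lemma act_inj : injective act.
Proof.
move=> X Y eqXY; apply: functional_extensionality => m.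
apply: functional_extensionality => n.
set d := (m + n)%N.
pose x p := X p (d - p)%N - Y p (d - p)%N.
have act_diff z : \sum_(p < d.+1) x p * poch (z + (d - p)%:R) p = 0.
  under eq_bigr => p _ do rewrite /x mulrBl.
  by rewrite sumrB -/(act X z d) eqXY subrr.
suff x0 j : (j <= d)%N -> x j = 0.
  by have /eqP := x0 m (leq_addr n m); rewrite /x /d addKn subr_eq0 => /eqP.
elim/ltn_ind: j => j IH le_jd.
have := act_diff ((j.+1)%:R - d%:R).
have lt_jd : (j < d.+1)%N by rewrite ltnS.
rewrite (bigD1 (Ordinal lt_jd)) //= big1 ?addr0.
  have -> : (j.+1)%:R - d%:R + (d - j)%:R = 1 :> R[i] by rewrite natrB //; ring.
  by move/eqP; rewrite mulf_eq0 (negbTE (poch1_neq0 _ _)) orbF => /eqP.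
move=> p p_neq_j; have le_pd : (p <= d)%N by rewrite -ltnS.
case: (ltngtP p j) => [lt_pj|lt_jp|eq_pj]; last by case/eqP: p_neq_j; apply: val_inj.
  by rewrite IH ?mul0r // (leq_trans (ltnW lt_pj)).
rewrite (@poch_eq0 _ _ p (p.-1 - j)%N) ?mulr0 //; first lia.
have -> : d%:R = ((d - p) + (p.-1 - j))%:R + (j.+1)%:R :> R[i].
  by rewrite -natrD; congr _%:R; lia.
rewrite -addrA -natrD; ring.
Qed.

Definition act_pair X Y : gop := fun z d =>
  \sum_(p < d.+1) \sum_(q < (d - p).+1) \sum_(r < (d - p - q).+1)
    X p q * Y r (d - p - q - r)%N * poch (z + (d - p - q - r)%:R) r
    * poch (z + (d - p)%:R) p.

Lemma act_amul_pair X Y : act (amul X Y) = act_pair X Y.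
Proof.
apply: functional_extensionality => z; apply: functional_extensionality => d.
pose g m p q k := (-1) ^+ k * ('C(m - p + k, k) * rising q k)%:R * X p q *
   Y (m - p + k)%N (d - m - q - k)%N * poch (z + (d - m)%:R) m.
transitivity (\sum_(m < d.+1) \sum_(p < m.+1) \sum_(q < (d - m).+1)
                \sum_(k < (d - m - q).+1) g m p q k).
  rewrite /act /amul; apply: eq_bigr => m _; rewrite mulr_suml.
  apply: eq_bigr => p _; rewrite mulr_suml; apply: eq_bigr => q _.
  by rewrite mulr_suml.
rewrite reindex_simplex4; apply: eq_bigr => -[p /= lt_pd] _.
apply: eq_bigr => -[q /= lt_qd] _; apply: eq_bigr => -[r /= lt_rd] _.
set s := (d - p - q - r)%N.
rewrite -(poch_reorder q r (z + s%:R)) [in RHS]mulr_sumr [in RHS]mulr_suml.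
apply: eq_bigr => -[k /= lt_kr] _; rewrite /g.
have -> : (p + r - k - p + k = r)%N by lia.
have -> : (d - (p + r - k) - q - k = s)%N by rewrite /s; lia.
have -> : (p + r - k = (r - k) + p)%N by lia.
rewrite pochD -addrA -natrD.
have -> : (d - (r - k + p) + (r - k) = d - p)%N by lia.
have -> : (d - (r - k + p) = s + (q + k))%N by rewrite /s; lia.
rewrite natrD addrA; ring.
Qed.

Lemma gcomp_act_pair X Y : gcomp (act X) (act Y) = act_pair X Y.
Proof.
apply: functional_extensionality => z; apply: functional_extensionality => d.
rewrite /gcomp /act.
pose h e r p := Y r (e - r)%N * poch (z + (e - r)%:R) r *
  (X p (d - e - p)%N * poch (z + e%:R + (d - e - p)%:R) p).
transitivity (\sum_(e < d.+1) \sum_(r < e.+1) \sum_(p < (d - e).+1) h e r p).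
  by apply: eq_bigr => e _; rewrite mulr_suml; apply: eq_bigr => r _; rewrite mulr_sumr.
rewrite exchange_simplex3; apply: eq_bigr => -[p /= lt_pd] _.
apply: eq_bigr => -[q /= lt_qd] _; apply: eq_bigr => -[r /= lt_rd] _.
rewrite /h; have -> : (d - (d - p - q) - p = q)%N by lia.
by rewrite -addrA -natrD subnK //; ring.
Qed.

Lemma act_amul X Y : act (amul X Y) = gcomp (act X) (act Y).
Proof. by rewrite act_amul_pair gcomp_act_pair. Qed.

Lemma amulA X Y W : amul (amul X Y) W = amul X (amul Y W).
Proof. by apply: act_inj; rewrite !act_amul gcompA. Qed.

Lemma amul1r X : amul X (aone R) = X.
Proof. by apply: act_inj; rewrite act_amul act_aone gcomp1r. Qed.

Lemma amul1l X : amul (aone R) X = X.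
Proof. by apply: act_inj; rewrite act_amul act_aone gcomp1l. Qed.

End Representation.

Section RightInverse.
Variable R : realType.
Implicit Types X Y : aseries R.

Definition amul_term X Y (m n p q : nat) : R[i] :=
  \sum_(k < (n - q).+1) (-1) ^+ k * ('C(m - p + k, k) * rising q k)%:R * X p q *
     Y (m - p + k)%N (n - q - k)%N.

Definition amul_tail X Y (m n : nat) : R[i] :=
  \sum_(p < m.+1) \sum_(q < n.+1 | (0 < p + q)%N) amul_term X Y m n p q.

Lemma amul_split X Y m n : amul X Y m n = X 0%N 0%N * Y m n + amul_tail X Y m n.
Proof.
have -> : amul X Y m n = \sum_(p < m.+1) \sum_(q < n.+1) amul_term X Y m n p q by [].
rewrite sum_split_origin /amul_term big_ord_recl big1 ?addr0.
  by rewrite !subn0 !addn0 bin0 risingn0 expr0 !mul1r.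
by move=> k _; rewrite lift0 rising0S muln0 mulr0 !mul0r.
Qed.

Lemma amul00 X Y : amul X Y 0%N 0%N = X 0%N 0%N * Y 0%N 0%N.
Proof. by rewrite amul_split /amul_tail big_ord1 big_mkcond big_ord1 addr0. Qed.

Lemma eq_amul_tail X Y Y' m n :
  (forall a b, (a + b < m + n)%N -> Y a b = Y' a b) ->
  amul_tail X Y m n = amul_tail X Y' m n.
Proof.
move=> eqY; apply: eq_bigr => -[p /= lt_pm] _; apply: eq_bigr => -[q /= lt_qn] /= pq_gt0.
by apply: eq_bigr => -[k /= lt_kn] _; rewrite eqY //; lia.
Qed.

Fixpoint rinv_approx X (f m n : nat) : R[i] :=
  if f is f'.+1 then aone R m n - amul_tail X (rinv_approx X f') m n else 0.

Lemma rinv_approx_stable X f m n :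
  (m + n < f)%N -> rinv_approx X f m n = rinv_approx X (m + n).+1 m n.
Proof.
elim/ltn_ind: f m n => -[//|f] IH m n lt_mn_f /=; congr (_ - _).
by apply: eq_amul_tail => a b lt_ab; rewrite IH ?(IH (m + n)%N) //; lia.
Qed.

Definition rinv X : aseries R := fun m n => rinv_approx X (m + n).+1 m n.

Lemma amul_rinv X : X 0%N 0%N = 1 -> amul X (rinv X) = aone R.
Proof.
move=> X00; apply: functional_extensionality => m; apply: functional_extensionality => n.
rewrite amul_split X00 mul1r /rinv /= (@eq_amul_tail X _ (rinv_approx X (m + n))) ?subrK //.
by move=> a b lt_ab; rewrite rinv_approx_stable.
Qed.

Lemma amul_linv X Y : X 0%N 0%N = 1 -> amul X Y = aone R -> amul Y X = aone R.
Proof.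
move=> X00 XY; have Y00 : Y 0%N 0%N = 1.
  by have := amul00 X Y; rewrite XY X00 mul1r.
have YW := amul_rinv Y00.
suff <- : rinv Y = X by [].
by rewrite -[LHS]amul1l -XY amulA YW amul1r.
Qed.

End RightInverse.

Lemma sum_expr_le (R : realFieldType) (r : R) N :
  0 <= r -> r <= 1 / 2 -> \sum_(i < N) r ^+ i <= 1 + 2 * r.
Proof.
move=> r_ge0 r_le; elim: N => [|N IH]; first by rewrite big_ord0; lra.
rewrite big_ord_recl expr0.
under eq_bigr => i _ do rewrite lift0 exprS.
have : r * \sum_(i < N) r ^+ i <= r * (1 + 2 * r) by apply: ler_wpM2l.
rewrite -mulr_sumr; nra.
Qed.

Lemma sum_tail_expr_le (R : realFieldType) (r : R) m n :
  0 <= r -> r <= 1 / 2 ->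
  \sum_(p < m.+1) \sum_(q < n.+1 | (0 < p + q)%N) r ^+ (p + q) <= 6 * r.
Proof.
move=> r_ge0 r_le.
have -> : \sum_(p < m.+1) \sum_(q < n.+1 | (0 < p + q)%N) r ^+ (p + q)
    = (\sum_(p < m.+1) r ^+ p) * (\sum_(q < n.+1) r ^+ q) - 1.
  rewrite big_distrlr /= (sum_split_origin m n (fun p q => r ^+ p * r ^+ q)).
  by rewrite expr0 mulr1 addrC addrK; under eq_bigr do under eq_bigr do rewrite exprD.
have sum_ge0 N : 0 <= \sum_(i < N) r ^+ i by apply: sumr_ge0 => i _; exact: exprn_ge0.
have := ler_pM (sum_ge0 m.+1) (sum_ge0 n.+1) (sum_expr_le m.+1 r_ge0 r_le)
  (sum_expr_le n.+1 r_ge0 r_le).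
nra.
Qed.

Section Bounds.
Variable R : realType.
Implicit Types X Y : aseries R.

Lemma norm_amul_term_le X Y (C R0 S : R) m n p q :
  0 <= C -> 0 <= R0 -> 0 <= S -> (p <= m)%N -> (q <= n)%N ->
  (forall p q, `|X p q| <= (C * R0 ^+ (p + q) * (q`!)%:R)%:C) ->
  (forall a b, (a + b = m + n - (p + q))%N ->
      `|Y a b| <= (S ^+ (a + b) * (rising a.+1 b)%:R)%:C) ->
  `|amul_term X Y m n p q| <=
     (C * R0 ^+ (p + q) * S ^+ (m + n - (p + q)) * (rising m.+1 n)%:R)%:C.
Proof.
move=> C_ge0 R0_ge0 S_ge0 le_pm le_qn Xle Yle.
apply: le_trans (ler_norm_sum _ _ _) _.
set K := C * R0 ^+ (p + q) * S ^+ (m + n - (p + q)).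
have K_ge0 : 0 <= K by rewrite /K !mulr_ge0 // exprn_ge0.
apply: (@le_trans _ _ (\sum_(k < (n - q).+1)
   (('C(m - p + k, k) * rising q k * rising (m - p + k).+1 (n - q - k) * q`!)%:R * K)%:C)).
  apply: ler_sum => -[k /= lt_kn] _.
  rewrite !normrM normrX normrN1 expr1n mul1r normr_nat.
  have deg : ((m - p + k) + (n - q - k) = m + n - (p + q))%N by lia.
  have -> : (('C(m - p + k, k) * rising q k * rising (m - p + k).+1 (n - q - k) * q`!)%:R
             * K)%:C
     = ('C(m - p + k, k) * rising q k)%:R * (C * R0 ^+ (p + q) * (q`!)%:R)%:C *
       (S ^+ (m - p + k + (n - q - k)) * (rising (m - p + k).+1 (n - q - k))%:R)%:C.
    rewrite -(rmorph_nat (real_complex R)) -!rmorphM; congr (_%:C).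
    by rewrite deg /K !natrM; ring.
  have Xpq := Xle p q; have Yab := Yle _ _ deg.
  by apply: ler_pM => //; [rewrite mulr_ge0 ?ler0n | apply: ler_pM].
rewrite -rmorph_sum lecR -mulr_suml -natr_sum -big_distrl /=.
rewrite [X in _ <= X]mulrC ler_wpM2r // ler_nat.
by have := sum_reorder_coef_le (m - p) (n - q) p q; rewrite !subnK.
Qed.

Lemma sum_tail_majorant_le (C R0 S : R) m n :
  0 <= C -> 0 < R0 -> 2 * R0 <= S -> 6 * C * R0 <= S ->
  \sum_(p < m.+1) \sum_(q < n.+1 | (0 < p + q)%N)
    C * R0 ^+ (p + q) * S ^+ (m + n - (p + q)) <= S ^+ (m + n).
Proof.
move=> C_ge0 R0_gt0 R0_le CR0_le.
have S_gt0 : 0 < S by lra.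
have r_ge0 : 0 <= R0 / S by rewrite divr_ge0 ?ltW.
have r_le : R0 / S <= 1 / 2.
  by rewrite -(ler_pM2r S_gt0) mulfVK ?gt_eqF //; lra.
have CS_le : C * (6 * (R0 / S)) <= 1.
  rewrite -(ler_pM2r S_gt0) mul1r; suff -> : C * (6 * (R0 / S)) * S = 6 * C * R0 by [].
  by field; rewrite gt_eqF.
apply: (@le_trans _ _ (S ^+ (m + n) * (C * (6 * (R0 / S))))); last first.
  by apply: ler_piMr => //; apply/exprn_ge0/ltW.
apply: (@le_trans _ _ (S ^+ (m + n) * (C * \sum_(p < m.+1) \sum_(q < n.+1 | (0 < p + q)%N)
    (R0 / S) ^+ (p + q)))); last first.
  apply: ler_wpM2l; first exact/exprn_ge0/ltW.
  by apply: ler_wpM2l => //; apply: sum_tail_expr_le.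
rewrite !mulr_sumr; apply: ler_sum => -[p /= lt_pm] _; rewrite !mulr_sumr.
apply: ler_sum => -[q /= lt_qn] _.
set k := (m + n - (p + q))%N; have -> : (m + n = (p + q) + k)%N by rewrite /k; lia.
rewrite [S ^+ (_ + k)]exprD expr_div_n le_eqVlt; apply/orP; left; apply/eqP.
by field; rewrite expf_neq0 // gt_eqF.
Qed.

Lemma norm_right_inverse_le X Y (C R0 : R) :
  0 <= C -> 0 < R0 -> (forall p q, `|X p q| <= (C * R0 ^+ (p + q) * (q`!)%:R)%:C) ->
  X 0%N 0%N = 1 -> amul X Y = aone R ->
  forall m n, `|Y m n| <= ((6 * R0 * (C + 1)) ^+ (m + n) * (rising m.+1 n)%:R)%:C.
Proof.
move=> C_ge0 R0_gt0 Xle X00 XY; set S := 6 * R0 * (C + 1).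
have R0C_ge0 := mulr_ge0 (ltW R0_gt0) C_ge0.
have R0_le : 2 * R0 <= S by rewrite /S; lra.
have CR0_le : 6 * C * R0 <= S by rewrite /S; lra.
have S_ge0 : 0 <= S by lra.
suff Yle D m n : (m + n)%N = D -> `|Y m n| <= (S ^+ (m + n) * (rising m.+1 n)%:R)%:C.
  by move=> m n; exact: Yle.
elim/ltn_ind: D m n => -[|D] IH m n deg.
  have [-> ->] : m = 0%N /\ n = 0%N by lia.
  have := amul00 X Y; rewrite XY X00 mul1r => <-.
  by rewrite /aone /= normr1 expr0 risingn0 mul1r.
have -> : Y m n = - amul_tail X Y m n.
  apply/eqP; rewrite -addr_eq0 -[Y m n]mul1r -X00 -amul_split XY /aone.
  by case: (m =P 0%N) => // m0; case: (n =P 0%N) => // n0; lia.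
rewrite normrN; apply: le_trans (ler_norm_sum _ _ _) _.
apply: (@le_trans _ _ (\sum_(p < m.+1) \sum_(q < n.+1 | (0 < p + q)%N)
   (C * R0 ^+ (p + q) * S ^+ (m + n - (p + q)) * (rising m.+1 n)%:R)%:C)).
  apply: ler_sum => -[p /= lt_pm] _; apply: le_trans (ler_norm_sum _ _ _) _.
  apply: ler_sum => -[q /= lt_qn] /= pq_gt0.
  apply: norm_amul_term_le => //; first exact: ltW.
  by move=> a b ab_deg; apply: (IH (a + b)%N) => //; lia.
under eq_bigr => p _ do rewrite -(rmorph_sum (real_complex R)) -mulr_suml.
rewrite -(rmorph_sum (real_complex R)) lecR -mulr_suml ler_wpM2r ?ler0n //.
exact: sum_tail_majorant_le.
Qed.

Lemma aconv_right_inverse X Y :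
  aconv X -> X 0%N 0%N = 1 -> amul X Y = aone R -> aconv Y.
Proof.
move=> [R0 [C [R0_gt1 [C_gt0 Xle]]]] X00 XY.
have Yle := norm_right_inverse_le (ltW C_gt0) (lt_trans ltr01 R0_gt1) Xle X00 XY.
set S := 6 * R0 * (C + 1) in Yle.
have S_ge1 : 1 <= S.
  by have := mulr_ge0 (ltW (lt_trans ltr01 R0_gt1)) (ltW C_gt0); rewrite /S; lra.
exists (2 * S), 1; split; first lra; split; first lra.
move=> p q; apply: le_trans (Yle p q) _.
rewrite lecR mul1r [(2 * S) ^+ _]exprMn (mulrC (2 ^+ _)) -mulrA.
by apply: ler_wpM2l; [apply: exprn_ge0; lra | apply: rising_le_exp_fact].
Qed.

End Bounds.

Theorem proposition1p1p7 (R : realType) (X : aseries R) :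
  aconv X -> X 0%N 0%N = 1 -> ainvertible_conv X.
Proof.
move=> Xconv X00; have XY := amul_rinv X00.
exists (rinv X); split; first exact: aconv_right_inverse XY.
by split; last exact: amul_linv.
Qed.
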